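(* Under the hypotheses (torsion-free $G$; $l:G\to\mathbb{Z}^n$ a $\delta$-regular $\delta$-hyperbolic length function with (A) $ht(\delta)=1$, (B) $l(g^m)<l(g)$ for nonzero integer $m$ implies $ht(l(g)-l(g^m))=1$, (C) $l(g)>0$ for $g\ne1$), let $1\le k<n$, $h\in G_{k+1}\setminus G_k$, $C=G_k\cap hG_kh^{-1}$, and let $E$ be the set of elements of $C$ that act elliptically on the $\mathbb{Z}^{n-1}$-tree $\Gamma$. Then $E$ is a normal subgroup of $C$ and $C/E$ is free abelian of rank at most $k-1$.
   Context: $\mathbb{Z}^m$ carries the right lexicographic order; $ht(a)$ is the largest index with nonzero coordinate, $ht(0)=0$. Length function: $l(1)=0$, $l(g)\ge0$, $l(g^{-1})=l(g)$, $l(gh)\le l(g)+l(h)$; $c(g,h)=\tfrac12(l(g)+l(h)-l(g^{-1}h))$; $\delta$-hyperbolic: $c(f,g)\ge\min\{c(f,h),c(g,h)\}-\delta$; $\delta$-regular: for all $g,h$ exist $g_c,h_c,g_d,h_d$ with $l(g_c)=l(h_c)=c(g,h)$, $g=g_cg_d$, $h=h_ch_d$, $l(g)=l(g_c)+l(g_d)$, $l(h)=l(h_c)+l(h_d)$, $l(g_c^{-1}h_c)\le4\delta$. $G_k=\{g\in G\mid ht(l(g))\le k\}$. $l_1(g)=(a_2,\dots,a_n)$ where $l(g)=(a_1,\dots,a_n)$. $\Gamma$ is the $\mathbb{Z}^{n-1}$-tree obtained from $(G,l_1)$ by Chiswell's construction: a $\mathbb{Z}^{n-1}$-tree with isometric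 $G$-action and base point $x_0$ with $l_1(g)=d(x_0,gx_0)$ for all $g$ and every point on some segment $[x_0,gx_0]$. An element acts elliptically if it fixes a point of $\Gamma$. *)

From HB Require Import structures.
From mathcomp Require Import all_boot all_order all_algebra.
Set Implicit Arguments. Unset Strict Implicit. Unset Printing Implicit Defensive.
Import Order.TTheory GRing.Theory Num.Theory.
Local Open Scope ring_scope.

(* Z^n is 'rV[int]_n; coordinate i (1-based in the paper) is entry i-1.
   Right lexicographic order: compare the highest index first. *)
Definition lexlt (n : nat) (a b : 'rV[int]_n) : bool :=
  [exists i : 'I_n, (a 0 i < b 0 i) &&
     [forall j : 'I_n, (i < j)%N ==> (a 0 j == b 0 j)]].
Definition lexle (n : nat) (a b : 'rV[int]_n) : bool := (a == b) || lexlt a b.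
Definition lexmin (n : nat) (a b : 'rV[int]_n) : 'rV[int]_n :=
  if lexle a b then a else b.
Definition lexabs (n : nat) (a : 'rV[int]_n) : 'rV[int]_n :=
  if lexle 0 a then a else - a.

(* ht(a) = largest (1-based) index with nonzero coordinate; ht 0 = 0 *)
Definition ht (n : nat) (a : 'rV[int]_n) : nat :=
  \max_(i < n | a 0 i != 0) (nat_of_ord i).+1.

Definition drop1 (n : nat) (a : 'rV[int]_n) : 'rV[int]_(n.-1) :=
  \row_(j < n.-1) oapp (fun i : 'I_n => a 0 i) 0 (insub (j.+1)%N).

Definition is_group (G : Type) (mul : G -> G -> G) (e : G) (inv : G -> G) : Prop :=
  (forall x y z, mul x (mul y z) = mul (mul x y) z) /\
  (forall x, mul e x = x) /\ (forall x, mul x e = x) /\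
  (forall x, mul (inv x) x = e) /\ (forall x, mul x (inv x) = e).

Fixpoint gpow (G : Type) (mul : G -> G -> G) (e : G) (g : G) (k : nat) : G :=
  match k with O => e | S k' => mul g (gpow mul e g k') end.

Definition gzpow (G : Type) (mul : G -> G -> G) (e : G) (inv : G -> G)
  (g : G) (m : int) : G :=
  match m with
  | Posz k => gpow mul e g k
  | Negz k => inv (gpow mul e g k.+1)
  end.

Definition torsion_free (G : Type) (mul : G -> G -> G) (e : G) : Prop :=
  forall g (k : nat), (0 < k)%N -> gpow mul e g k = e -> g = e.

Definition is_length_function (G : Type) (mul : G -> G -> G) (e : G)
  (inv : G -> G) (n : nat) (l : G -> 'rV[int]_n) : Prop :=
  l e = 0 /\ (forall g, lexle 0 (l g)) /\ (forall g, l (inv g) = l g) /\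
  (forall g h, lexle (l (mul g h)) (l g + l h)).

(* 2 c(g,h) = l(g) + l(h) - l(g^-1 h)  (c itself may live in (1/2)Z^n) *)
Definition c2 (G : Type) (mul : G -> G -> G) (inv : G -> G) (n : nat)
  (l : G -> 'rV[int]_n) (g h : G) : 'rV[int]_n :=
  l g + l h - l (mul (inv g) h).

(* c(f,g) >= min{c(f,h), c(g,h)} - delta, multiplied by 2 *)
Definition hyperbolic (G : Type) (mul : G -> G -> G) (inv : G -> G) (n : nat)
  (l : G -> 'rV[int]_n) (delta : 'rV[int]_n) : Prop :=
  forall f g h, lexle (lexmin (c2 mul inv l f h) (c2 mul inv l g h) - delta *+ 2)
                      (c2 mul inv l f g).

Definition regular (G : Type) (mul : G -> G -> G) (inv : G -> G) (n : nat)
  (l : G -> 'rV[int]_n) (delta : 'rV[int]_n) : Prop :=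
  forall g h, exists gc hc gd hd,
    [/\ (l gc) *+ 2 = c2 mul inv l g h, (l hc) *+ 2 = c2 mul inv l g h,
        g = mul gc gd, h = mul hc hd &
        [/\ l g = l gc + l gd, l h = l hc + l hd &
        lexle (l (mul (inv gc) hc)) (delta *+ 4)]].

Definition is_lambda_metric (m : nat) (X : Type) (d : X -> X -> 'rV[int]_m) : Prop :=
  (forall x y, lexle 0 (d x y)) /\ (forall x y, d x y = 0 <-> x = y) /\
  (forall x y, d x y = d y x) /\ (forall x y z, lexle (d x z) (d x y + d y z)).

Definition is_segment (m : nat) (X : Type) (d : X -> X -> 'rV[int]_m)
  (x y : X) (S : X -> Prop) : Prop :=
  exists (a b : 'rV[int]_m) (sigma : 'rV[int]_m -> X),
    [/\ lexle a b, sigma a = x, sigma b = y,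
        (forall s t, lexle a s -> lexle s b -> lexle a t -> lexle t b ->
           d (sigma s) (sigma t) = lexabs (t - s)) &
        (forall z, S z <-> exists t, [/\ lexle a t, lexle t b & sigma t = z])].

(* Lambda-tree (Alperin-Bass / Chiswell axioms) *)
Definition is_lambda_tree (m : nat) (X : Type) (d : X -> X -> 'rV[int]_m) : Prop :=
  is_lambda_metric d /\
  (forall x y, exists S, is_segment d x y S) /\
  (forall x y z S1 S2, is_segment d x y S1 -> is_segment d y z S2 ->
     (forall w, S1 w -> S2 w -> w = y) ->
     is_segment d x z (fun w => S1 w \/ S2 w)) /\
  (forall x y z S1 S2, is_segment d x y S1 -> is_segment d x z S2 ->
     exists w, is_segment d x w (fun v => S1 v /\ S2 v)).

Definition is_isometric_action (G : Type) (mul : G -> G -> G) (e : G)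
  (m : nat) (X : Type) (d : X -> X -> 'rV[int]_m) (act : G -> X -> X) : Prop :=
  (forall x, act e x = x) /\ (forall g h x, act (mul g h) x = act g (act h x)) /\
  (forall g x y, d (act g x) (act g y) = d x y).

(* Gamma: the Z^(n-1)-tree from Chiswell's construction applied to (G, l_1),
   characterized as in the paper *)
Definition chiswell_tree (G : Type) (mul : G -> G -> G) (e : G) (n : nat)
  (l : G -> 'rV[int]_n) (X : Type) (d : X -> X -> 'rV[int]_(n.-1))
  (act : G -> X -> X) (x0 : X) : Prop :=
  [/\ is_lambda_tree d, is_isometric_action mul e d act,
      (forall g, drop1 (l g) = d x0 (act g x0)) &
      (forall p, exists g S, is_segment d x0 (act g x0) S /\ S p)].

Definition elliptic (G X : Type) (act : G -> X -> X) (g : G) : Prop :=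
  exists x, act g x = x.

Definition Gk (G : Type) (n : nat) (l : G -> 'rV[int]_n) (k : nat) (g : G) : Prop :=
  (ht (l g) <= k)%N.

(* Let p = h x0.  Elements of C move x0 and p by distances of height at most
   k-1 in Gamma, while d(x0, p) has height k.  By the four point condition,
   x |-> d(x0, x p) - d(x0, p) is then a homomorphism on C; its kernel is
   exactly the set of elliptic elements (a fixed point is found at a branch
   point of a tripod), and its values have height at most k-1.  A subgroup of
   Z^(n-1) of height at most k-1 is free abelian of rank at most k-1. *)

From Pilot Require Import Defs.
From mathcomp Require Import all_boot all_order all_algebra zify ring.
From Stdlib Require Import Classical Wf_nat.
Import Order.TTheory GRing.Theory Num.Theory.
Set Implicit Arguments. Unset Strict Implicit. Unset Printing Implicit Defensive.
Local Open Scope ring_scope.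

Ltac row_ring := apply/rowP => ?; rewrite !mxE; ring.

Section LexOrder.
Variable m : nat.
Implicit Types a b c u v : 'rV[int]_m.

Lemma lexltP a b : reflect (exists i : 'I_m, a 0 i < b 0 i /\
   forall j : 'I_m, (i < j)%N -> a 0 j = b 0 j) (lexlt a b).
Proof.
apply: (iffP existsP) => [[i /andP[lt /forallP H]]|[i [lt H]]]; exists i.
  by split => // j ij; apply/eqP/(implyP (H j) ij).
by rewrite lt; apply/forallP => j; apply/implyP => /H ->.
Qed.

Lemma lexltxx a : lexlt a a = false.
Proof. by apply/lexltP => -[i []]; rewrite ltxx. Qed.

Lemma lexlt_trans b a c : lexlt a b -> lexlt b c -> lexlt a c.
Proof.
move=> /lexltP[i [lti Hi]] /lexltP[i' [lti' Hi']]; apply/lexltP.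
case: (ltngtP i i') => [ii'|i'i|/val_inj ii'].
- exists i'; split; first by rewrite Hi.
  by move=> j ij; rewrite Hi ?Hi' //; apply: ltn_trans ij.
- exists i; split; first by rewrite -(Hi' i i'i).
  by move=> j ij; rewrite Hi ?Hi' //; apply: ltn_trans ij.
- subst i'; exists i; split; first exact: lt_trans lti'.
  by move=> j ij; rewrite Hi ?Hi'.
Qed.

Lemma lexltD2r c a b : lexlt (a + c) (b + c) = lexlt a b.
Proof.
apply: eq_existsb => i; rewrite !mxE ltrD2r; congr andb.
by apply: eq_forallb => j; rewrite !mxE (inj_eq (addIr _)).
Qed.

Lemma top_coord v : v != 0 -> exists i : 'I_m, v 0 i != 0 /\
  forall j : 'I_m, (i < j)%N -> v 0 j = 0.
Proof.
move=> nz.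
have [i0 Hi0] : exists i0 : 'I_m, v 0 i0 != 0.
  apply/existsP; apply: contraR nz => /existsPn H.
  by apply/eqP/rowP => i; rewrite mxE; move/negbNE/eqP: (H i).
have [i Hi Hmax] := @arg_maxnP _ i0 (fun i : 'I_m => v 0 i != 0) val Hi0.
exists i; split => // j ij; apply/eqP; apply: contraTT ij => Hj.
by rewrite -leqNgt; apply: Hmax.
Qed.

Lemma lexlt_total a b : a != b -> lexlt a b || lexlt b a.
Proof.
rewrite -subr_eq0 => /top_coord[i []]; rewrite !mxE subr_eq0 => Hi Htop.
have Heq (j : 'I_m) : (i < j)%N -> a 0 j = b 0 j.
  by move=> /Htop /eqP; rewrite !mxE subr_eq0 => /eqP.
case: (ltgtP (a 0 i) (b 0 i)) Hi => // lt _; apply/orP; [left|right];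
  by apply/lexltP; exists i; split => // j /Heq.
Qed.

Lemma lexle_refl a : lexle a a.
Proof. by rewrite /lexle eqxx. Qed.

Lemma lexltW a b : lexlt a b -> lexle a b.
Proof. by rewrite /lexle => ->; rewrite orbT. Qed.

Lemma lexle_lt_trans b a c : lexle a b -> lexlt b c -> lexlt a c.
Proof. by case/orP => [/eqP->|ab bc] //; apply: lexlt_trans bc. Qed.

Lemma lexlt_le_trans b a c : lexlt a b -> lexle b c -> lexlt a c.
Proof. by move=> ab /orP[/eqP<-|bc] //; apply: lexlt_trans bc. Qed.

Lemma lexle_trans b a c : lexle a b -> lexle b c -> lexle a c.
Proof. by case/orP => [/eqP->|ab] // /(lexlt_le_trans ab)/lexltW. Qed.

Lemma lexlt_geF a b : lexlt a b -> lexle b a = false.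
Proof. by move=> ab; apply/negP => /(lexlt_le_trans ab); rewrite lexltxx. Qed.

Lemma lexle_anti a b : lexle a b -> lexle b a -> a = b.
Proof. by case/orP => [/eqP//|/lexlt_geF->]. Qed.

Lemma lexltNge a b : lexlt a b = ~~ lexle b a.
Proof.
apply/idP/idP => [/lexlt_geF->//|]; rewrite /lexle negb_or eq_sym.
by case/andP => /lexlt_total /orP[] // ->.
Qed.

Lemma lexle_total a b : lexle a b || lexle b a.
Proof. by case: (boolP (lexle b a)); rewrite ?orbT // -lexltNge => /lexltW ->. Qed.

Lemma lexleD2r c a b : lexle (a + c) (b + c) = lexle a b.
Proof. by rewrite /lexle lexltD2r (inj_eq (addIr _)). Qed.

Lemma lexleD2l c a b : lexle (c + a) (c + b) = lexle a b.
Proof. by rewrite (addrC c a) (addrC c b) lexleD2r. Qed.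

Lemma lexleD a b c u : lexle a b -> lexle c u -> lexle (a + c) (b + u).
Proof.
move=> ab cu; apply: (@lexle_trans (b + c)); first by rewrite lexleD2r.
by rewrite lexleD2l.
Qed.

Lemma lexlt_leD a b c u : lexlt a b -> lexle c u -> lexlt (a + c) (b + u).
Proof.
move=> ab cu; apply: (@lexlt_le_trans (b + c)); first by rewrite lexltD2r.
by rewrite lexleD2l.
Qed.

Lemma lexltD_ge0 a b : lexlt 0 a -> lexle 0 b -> lexlt 0 (a + b).
Proof. by move=> a_gt0 b_ge0; rewrite -(addr0 0); apply: lexlt_leD. Qed.

Lemma subr_lexge0 a b : lexle 0 (b - a) = lexle a b.
Proof. by rewrite -(lexleD2r a) subrK add0r. Qed.

Lemma subr_lexgt0 a b : lexlt 0 (b - a) = lexlt a b.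
Proof. by rewrite -(lexltD2r a) subrK add0r. Qed.

Lemma lexleBlDr a b c : lexle (a - c) b = lexle a (b + c).
Proof. by rewrite -(lexleD2r c) subrK. Qed.

Lemma lexleN2 a b : lexle (- a) (- b) = lexle b a.
Proof. by rewrite -subr_lexge0 opprK addrC subr_lexge0. Qed.

Lemma lexabs_ge0 v : lexle 0 v -> lexabs v = v.
Proof. by rewrite /lexabs => ->. Qed.

Lemma lexabsN v : lexabs (- v) = lexabs v.
Proof.
rewrite /lexabs opprK -[lexle 0 (- v)]lexleN2 opprK oppr0.
have [->|v0] := eqVneq v 0; first by rewrite oppr0 lexle_refl.
case: (boolP (lexle 0 v)) => [v_ge0|]; last by rewrite -lexltNge => /lexltW ->.
have v_gt0 : lexlt 0 v by move: v_ge0; rewrite /lexle eq_sym (negbTE v0).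
by rewrite lexlt_geF.
Qed.

End LexOrder.

Section Height.
Variable m : nat.
Implicit Types a b s u v : 'rV[int]_m.

Lemma htP v t : reflect (forall j : 'I_m, (t <= j)%N -> v 0 j = 0) (ht v <= t)%N.
Proof.
apply: (iffP idP) => [/bigmax_leqP H j tj|H].
  by apply/eqP; apply: contraTT tj => /H; rewrite -ltnNge.
by apply/bigmax_leqP => j nz; rewrite ltnNge; apply: contra nz => /H ->.
Qed.

Lemma ht_le_size v : (ht v <= m)%N.
Proof. by apply/htP => j; rewrite leqNgt ltn_ord. Qed.

Lemma ht_le0 v : (ht v <= 0)%N -> v = 0.
Proof. by move/htP => H; apply/rowP => j; rewrite mxE H. Qed.

Lemma htD a b t : (ht a <= t)%N -> (ht b <= t)%N -> (ht (a + b) <= t)%N.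
Proof. by move=> /htP Ha /htP Hb; apply/htP => j tj; rewrite mxE Ha ?Hb ?addr0. Qed.

Lemma htZ (c : int) a t : (ht a <= t)%N -> (ht (c *: a) <= t)%N.
Proof. by move=> /htP Ha; apply/htP => j tj; rewrite mxE Ha ?mulr0. Qed.

Lemma htN a : ht (- a) = ht a.
Proof. by apply: eq_bigl => i; rewrite mxE oppr_eq0. Qed.

Lemma ht_leS_coord0 v (J : 'I_m) : (ht v <= J.+1)%N -> v 0 J = 0 -> (ht v <= J)%N.
Proof.
move=> /htP v_top vJ; apply/htP => i; rewrite leq_eqVlt => /orP[/eqP/val_inj <-|] //.
exact: v_top.
Qed.

Lemma ht_top_coord v (i : 'I_m) : v 0 i != 0 ->
  (forall j : 'I_m, (i < j)%N -> v 0 j = 0) -> ht v = i.+1.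
Proof.
move=> nz top; apply/anti_leq/andP; split; first exact/htP.
by rewrite /ht (bigD1 i) //= leq_maxl.
Qed.

Lemma lexlt_ht s u t : (ht s <= t)%N -> lexle 0 u -> ~~ (ht u <= t)%N -> lexlt s u.
Proof.
move=> /htP s_top u_ge0 u_high.
have u0 : u != 0 by apply: contraNneq u_high => ->; apply/htP => j _; rewrite mxE.
have [i [ui top]] := top_coord u0.
have ti : (t <= i)%N by move: u_high; rewrite (ht_top_coord ui top) ltnNge negbK.
have u_gt0 : lexlt 0 u by move: u_ge0; rewrite /lexle eq_sym (negbTE u0).
apply/lexltP; exists i; split => [|j ij]; last first.
  by rewrite top // s_top //; apply: leq_trans (ltnW ij).
rewrite s_top //; case/lexltP: u_gt0 => i' [+ top'].
case: (ltngtP i i') => [/top->|/top'|/val_inj->]; rewrite ?mxE ?ltxx //.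
by move=> ui0; move: ui; rewrite -ui0 eqxx.
Qed.

Lemma ht_lexle a b : lexle 0 a -> lexle a b -> (ht a <= ht b)%N.
Proof.
move=> a_ge0 ab; apply: contraTT isT => ba.
by move: (lexlt_ht (leqnn (ht b)) a_ge0 ba); rewrite lexltNge ab.
Qed.

Lemma ht_lexle_sym v s : lexle (- s) v -> lexle v s -> (ht v <= ht s)%N.
Proof.
case/orP: (lexle_total 0 v) => v0 Nsv vs; first exact: ht_lexle.
by rewrite -htN ht_lexle // -lexleN2 opprK // oppr0.
Qed.

End Height.

Section LambdaTree.
Variables (m : nat) (X : Type) (d : X -> X -> 'rV[int]_m).
Hypothesis tree : is_lambda_tree d.

Lemma dist_ge0 x y : lexle 0 (d x y). Proof. by case: tree => -[]. Qed.
Lemma dist0_eq x y : d x y = 0 -> x = y. Proof. by case: tree => -[_ [/(_ x y) []]]. Qed.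
Lemma distC x y : d x y = d y x. Proof. by case: tree => -[_ [_ []]]. Qed.
Lemma dist_triangle x y z : lexle (d x z) (d x y + d y z).
Proof. by case: tree => -[_ [_ [_]]]. Qed.

Lemma segment_exists x y : exists S, is_segment d x y S.
Proof. by case: tree => _ []. Qed.

Lemma segment_glue x y z S1 S2 : is_segment d x y S1 -> is_segment d y z S2 ->
  (forall w, S1 w -> S2 w -> w = y) -> is_segment d x z (fun w => S1 w \/ S2 w).
Proof. by case: tree => _ [_ [glue _]]; apply: glue. Qed.

Lemma segment_meet x y z S1 S2 : is_segment d x y S1 -> is_segment d x z S2 ->
  exists w, is_segment d x w (fun v => S1 v /\ S2 v).
Proof. by case: tree => _ [_ [_]]; apply. Qed.

Lemma segment_dist x y S z : is_segment d x y S -> S z -> d x z + d z y = d x y.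
Proof.
move=> [a [b [sg [ab <- <- iso HS]]]] /HS [t [a_t tb <-]].
by rewrite !iso ?lexle_refl // !lexabs_ge0 ?subr_lexge0 //; row_ring.
Qed.

Lemma segment_inj x y S z z' : is_segment d x y S -> S z -> S z' ->
  d x z = d x z' -> z = z'.
Proof.
move=> [a [b [sg [ab <- _ iso HS]]]] /HS [t [a_t tb <-]] /HS [t' [a_t' tb' <-]].
rewrite !iso ?lexle_refl // !lexabs_ge0 ?subr_lexge0 // => /(congr1 (+%R^~ a)).
by rewrite !subrK => ->.
Qed.

Lemma segment_point x y S mu : is_segment d x y S -> lexle 0 mu -> lexle mu (d x y) ->
  exists z, S z /\ d x z = mu.
Proof.
move=> [a [b [sg [ab <- <- iso HS]]]] mu_ge0.
rewrite iso ?lexle_refl // lexabs_ge0 ?subr_lexge0 // -(lexleD2r a) subrK => mub.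
have amu : lexle a (mu + a) by rewrite -{1}(add0r a) lexleD2r.
exists (sg (mu + a)); split; first by apply/HS; exists (mu + a).
by rewrite iso ?lexle_refl // lexabs_ge0 ?subr_lexge0 // addrK.
Qed.

Lemma segment_start x y S : is_segment d x y S -> S x.
Proof. by move=> [a [b [sg [ab <- _ _ HS]]]]; apply/HS; exists a; rewrite lexle_refl. Qed.

Lemma segment_end x y S : is_segment d x y S -> S y.
Proof. by move=> [a [b [sg [ab _ <- _ HS]]]]; apply/HS; exists b; rewrite lexle_refl. Qed.

Lemma segment_rev x y S : is_segment d x y S -> is_segment d y x S.
Proof.
move=> [a [b [sg [ab sa sb iso HS]]]].
have leNr u v : lexle u (- v) -> lexle v (- u) by rewrite -lexleN2 opprK.
have leNl u v : lexle (- v) u -> lexle (- u) v by rewrite -lexleN2 opprK.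
exists (- b), (- a), (fun t => sg (- t)); split; rewrite ?opprK //.
- by rewrite lexleN2.
- move=> s t bs sa' bt ta'; rewrite iso; try by [apply: leNl|apply: leNr].
  by rewrite -lexabsN; congr lexabs; row_ring.
move=> z; rewrite HS; split => -[t [a_t tb <-]]; exists (- t).
  by split; [apply: leNl; rewrite opprK|apply: leNr; rewrite opprK|rewrite opprK].
by split; [apply: leNr|apply: leNl|].
Qed.

Lemma segment_tail x y S z : is_segment d x y S -> S z ->
  exists T, is_segment d z y T /\ forall v, T v -> S v /\ lexle (d x z) (d x v).
Proof.
move=> [a [b [sg [ab sa sb iso HS]]]] /HS [t [a_t tb tz]].
exists (fun v => exists s, [/\ lexle t s, lexle s b & sg s = v]); split.
  exists t, b, sg; split => // s s' ts sb' ts' sb''.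
  by apply: iso => //; [apply: lexle_trans a_t ts|apply: lexle_trans a_t ts'].
move=> v [s [ts sb' <-]]; have hs := lexle_trans a_t ts.
split; first by apply/HS; exists s.
by rewrite -tz -sa !iso ?lexle_refl // !lexabs_ge0 ?subr_lexge0 // lexleD2r.
Qed.

(* [w] is the branch point of the tripod spanned by [q], [a], [b]. *)
Lemma branch_point_dist q a b S1 S2 w : is_segment d q a S1 -> is_segment d q b S2 ->
  is_segment d q w (fun v => S1 v /\ S2 v) -> d a b = d a w + d w b.
Proof.
move=> s1 s2 sw; have [w1 w2] := segment_end sw.
have [Ta [sTa HTa]] := segment_tail s1 w1.
have [Tb [sTb HTb]] := segment_tail s2 w2.
have disjoint v : Ta v -> Tb v -> v = w.
  move=> /HTa [v1 le1] /HTb [v2 _]; apply: dist0_eq; apply: lexle_anti (dist_ge0 _ _).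
  by rewrite -(lexleD2r (d q v)) add0r addrC (segment_dist sw).
have sab := segment_glue (segment_rev sTa) sTb disjoint.
by rewrite (segment_dist sab) //; right; apply: segment_start sTb.
Qed.

Lemma tripod q a b : exists w, [/\ d q a = d q w + d w a, d q b = d q w + d w b &
  d a b = d a w + d w b].
Proof.
have [S1 s1] := segment_exists q a; have [S2 s2] := segment_exists q b.
have [w sw] := segment_meet s1 s2; have [w1 w2] := segment_end sw.
exists w; split; rewrite ?(segment_dist s1 w1) ?(segment_dist s2 w2) //.
exact: branch_point_dist sw.
Qed.

(* Twice the Gromov product (a . b)_q. *)
Definition gprod q a b := d q a + d q b - d a b.

Lemma gprodC q a b : gprod q a b = gprod q b a.
Proof. by rewrite /gprod (distC a b) (addrC (d q a)). Qed.

Lemma gprod_branch q a b S1 S2 w : is_segment d q a S1 -> is_segment d q b S2 ->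
  is_segment d q w (fun v => S1 v /\ S2 v) -> gprod q a b = d q w + d q w.
Proof.
move=> s1 s2 sw; have [w1 w2] := segment_end sw.
rewrite /gprod (branch_point_dist s1 s2 sw) -(segment_dist s1 w1) -(segment_dist s2 w2).
by rewrite (distC w a); row_ring.
Qed.

Lemma branch_dist_le q a b c Sa Sb Sc wab wac wbc :
  is_segment d q a Sa -> is_segment d q b Sb -> is_segment d q c Sc ->
  is_segment d q wab (fun v => Sa v /\ Sb v) ->
  is_segment d q wac (fun v => Sa v /\ Sc v) ->
  is_segment d q wbc (fun v => Sb v /\ Sc v) ->
  lexle (d q wac) (d q wbc) -> lexle (d q wac) (d q wab).
Proof.
move=> sa sb sc sab sac sbc le_ac_bc; have [wa wc] := segment_end sac.
have [z [[zb zc] zd]] := segment_point sbc (dist_ge0 _ _) le_ac_bc.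
have zw : z = wac by apply: (segment_inj sc).
rewrite zw in zb; rewrite -(segment_dist sab (conj wa zb)) -{1}(addr0 (d q wac)) lexleD2l.
exact: dist_ge0.
Qed.

Lemma gprod_hyperbolic q a b c :
  lexle (gprod q a c) (gprod q a b) \/ lexle (gprod q b c) (gprod q a b).
Proof.
have [Sa sa] := segment_exists q a; have [Sb sb] := segment_exists q b.
have [Sc sc] := segment_exists q c.
have [wab sab] := segment_meet sa sb; have [wac sac] := segment_meet sa sc.
have [wbc sbc] := segment_meet sb sc; have [wba sba] := segment_meet sb sa.
case/orP: (lexle_total (d q wac) (d q wbc)) => H; [left|right].
  rewrite (gprod_branch sa sb sab) (gprod_branch sa sc sac).
  by apply: lexleD; apply: (branch_dist_le sa sb sc sab sac sbc H).
rewrite [gprod q a b]gprodC (gprod_branch sb sa sba) (gprod_branch sb sc sbc).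
by apply: lexleD; apply: (branch_dist_le sb sa sc sba sbc sac H).
Qed.

Lemma four_point u v w t : lexle (d u t + d v w) (d u w + d v t) \/
                           lexle (d u t + d v w) (d u v + d w t).
Proof.
by case: (gprod_hyperbolic u v w t); rewrite /gprod => H; [left|right];
  rewrite -subr_lexge0; move: H; rewrite -subr_lexge0; congr lexle; row_ring.
Qed.

End LambdaTree.

Lemma least_nat (P : nat -> Prop) : (exists n, P n) ->
  exists n, P n /\ forall k, P k -> (n <= k)%N.
Proof.
move=> exP; have [n [[Pn n_min] _]] :=
  dec_inh_nat_subset_has_unique_least_element P (fun k => classic (P k)) exP.
by exists n; split => // k /n_min /ssrnat.leP.
Qed.

Definition is_subgroup (G : Type) (mul : G -> G -> G) (e : G) (inv : G -> G)
  (C : G -> Prop) : Prop :=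
  [/\ C e, forall x y, C x -> C y -> C (mul x y) & forall x, C x -> C (inv x)].

Section AdditiveOnSubgroup.
Variables (G : Type) (mul : G -> G -> G) (e : G) (inv : G -> G) (C : G -> Prop).
Hypotheses (HG : is_group mul e inv) (HC : is_subgroup mul e inv C).
Let C1 : C e. Proof. by case: HC. Qed.
Let CM x y : C x -> C y -> C (mul x y). Proof. by case: HC => _ + _; apply. Qed.
Let CV x : C x -> C (inv x). Proof. by case: HC => _ _; apply. Qed.

Definition additive_on (V : zmodType) (f : G -> V) :=
  forall x y, C x -> C y -> f (mul x y) = f x + f y.

Section Additive.
Variables (V : zmodType) (f : G -> V).
Hypothesis f_add : additive_on f.

Lemma additive_on1 : f e = 0.
Proof.
have [_ [mul1g _]] := HG.
by apply: (addrI (f e)); rewrite -f_add // mul1g addr0.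
Qed.

Lemma additive_onV x : C x -> f (inv x) = - f x.
Proof.
have [_ [_ [_ [_ mulgV]]]] := HG.
move=> Cx; have := f_add Cx (CV Cx).
by rewrite mulgV additive_on1 => /esym/addr0_eq.
Qed.

Lemma C_gzpow g t : C g -> C (gzpow mul e inv g t).
Proof.
move=> Cg; have Cpow k : C (gpow mul e g k) by elim: k => //= k; apply: CM.
by case: t => k; [exact: Cpow|exact: CV (Cpow k.+1)].
Qed.

Lemma additive_on_gzpow g t : C g ->
  f (gzpow mul e inv g t) = f g *~ t.
Proof.
move=> Cg; have Cpow k : C (gpow mul e g k) by elim: k => //= k; apply: CM.
have f_pow k : f (gpow mul e g k) = f g *+ k.
  by elim: k => [|k IHk] /=; rewrite ?additive_on1 // f_add // IHk mulrS.
case: t => k; first exact: f_pow.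
change (f (inv (gpow mul e g k.+1)) = f g *~ Negz k).
by rewrite additive_onV // f_pow NegzE mulrNz pmulrn.
Qed.

Lemma additive_on_kernel_normal (K : G -> Prop) :
  (forall x, C x -> (K x <-> f x = 0)) ->
  let E := fun x => C x /\ K x in
  E e /\ (forall x y, E x -> E y -> E (mul x y)) /\ (forall x, E x -> E (inv x)) /\
  (forall c x, C c -> E x -> E (mul (mul c x) (inv c))).
Proof.
move=> Kf E; have Ef x : C x -> f x = 0 -> E x by move=> Cx /(Kf x Cx).
have fE x : E x -> f x = 0 by case=> Cx /(Kf x Cx).
have CE x : E x -> C x by case.
split; first exact: Ef (additive_on1).
split; first by move=> x y Ex Ey; apply: Ef; [exact: CM (CE x Ex) (CE y Ey)|
  rewrite (f_add (CE x Ex) (CE y Ey)) (fE x Ex) (fE y Ey) addr0].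
split; first by move=> x Ex; apply: Ef; [exact: CV (CE x Ex)|
  rewrite (additive_onV (CE x Ex)) (fE x Ex) oppr0].
move=> c x Cc Ex; have Cx := CE x Ex; have Ccx := CM Cc Cx.
apply: Ef; first exact: CM Ccx (CV Cc).
by rewrite (f_add Ccx (CV Cc)) (f_add Cc Cx) (fE x Ex) addr0 additive_onV // subrr.
Qed.

End Additive.

(* [g0] attains the least positive value of [f]; the remainder of [f x] modulo
   [f g0] is the value of [f] at [x g0^-q], hence zero. *)
Lemma additive_on_int_cyclic (f : G -> int) : additive_on f ->
  exists g0, C g0 /\ forall x, C x -> (f g0 %| f x)%Z.
Proof.
move=> f_add; case: (classic (exists x, C x /\ f x != 0)) => [[x1 [Cx1 fx1]]|all0]; last first.
  exists e; rewrite additive_on1 //; split => // x Cx; rewrite dvd0z.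
  by apply: contraT => fx; case: all0; exists x.
have [N [[g0 [Cg0 fg0]] N_min]] : exists N, (exists g, C g /\ f g = N.+1%:Z) /\
    forall M, (exists g, C g /\ f g = M.+1%:Z) -> (N <= M)%N.
  apply: least_nat; case E: (f x1) fx1 => [[|n]|n] // _; first by exists n, x1.
  by exists n, (inv x1); split; [exact: CV|rewrite additive_onV // E NegzE opprK].
exists g0; split => // x Cx; apply/dvdz_mod0P.
pose w := gzpow mul e inv g0 (- (f x %/ f g0)%Z); have Cw : C w by apply: C_gzpow.
have fxw : f (mul x w) = (f x %% f g0)%Z.
  rewrite f_add // (additive_on_gzpow f_add) // -mulrzr intz {1}(divz_eq (f x) (f g0)); ring.
have g0_gt0 : 0 < f g0 by rewrite fg0.
have := ltz_pmod (f x) g0_gt0; have := modz_ge0 (f x) (lt0r_neq0 g0_gt0).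
case E: (f x %% f g0)%Z => [[|M]|M] // _; rewrite fg0 ltz_nat ltnS => lt_MN.
have: (N <= M)%N by apply: N_min; exists (mul x w); split; [exact: CM|rewrite fxw E].
by rewrite leqNgt lt_MN.
Qed.

Lemma additive_on_ht_split mm (psi : G -> 'rV[int]_mm) (J : 'I_mm) :
  additive_on psi -> (forall x, C x -> (ht (psi x) <= J.+1)%N) ->
  (forall x, C x -> (ht (psi x) <= J)%N) \/
  exists g0 (q : G -> int), [/\ C g0, additive_on q, q g0 = 1,
     forall x, C x -> (ht (psi x - q x *: psi g0) <= J)%N &
     forall x, C x -> psi x = 0 -> q x = 0].
Proof.
move=> psi_add psi_ht; pose f x := psi x 0 J.
have f_add : additive_on f by move=> x y Cx Cy; rewrite /f psi_add // mxE.
have [g0 [Cg0 g0_dvd]] := additive_on_int_cyclic f_add.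
have [g0_0|g0_nz] := eqVneq (f g0) 0.
  left => x Cx; apply: ht_leS_coord0 (psi_ht x Cx) _.
  by apply/eqP; rewrite -dvd0z -g0_0 g0_dvd.
right; pose q x := (f x %/ f g0)%Z.
have fq x : C x -> f x = q x * f g0 by move=> Cx; rewrite divzK ?g0_dvd.
exists g0, q; split => //.
- move=> x y Cx Cy; apply: (mulIf g0_nz).
  by rewrite mulrDl -fq -?fq ?f_add //; apply: CM.
- by rewrite /q divzz g0_nz.
- move=> x Cx; apply: ht_leS_coord0.
    by apply: htD (psi_ht x Cx) _; rewrite -scaleNr; apply/htZ/psi_ht.
  by rewrite !mxE -/(f x) -/(f g0) fq // subrr.
move=> x Cx psi0; have := fq x Cx; rewrite /f psi0 mxE => /esym/eqP.
by rewrite mulf_eq0 (negbTE g0_nz) orbF => /eqP.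
Qed.

Lemma additive_on_row_mx r (phi : G -> 'rV[int]_r) (q : G -> int) g0 :
  additive_on phi -> additive_on q -> C g0 -> phi g0 = 0 -> q g0 = 1 ->
  (forall v, exists x, C x /\ phi x = v) ->
  let chi x := row_mx (phi x) (\row_(i < 1) q x) in
  [/\ additive_on chi, forall v, exists x, C x /\ chi x = v &
      forall x, chi x = 0 <-> phi x = 0 /\ q x = 0].
Proof.
move=> phi_add q_add Cg0 phi_g0 q_g0 phi_onto chi; split.
- move=> x y Cx Cy; rewrite /chi phi_add // q_add // add_row_mx.
  by congr row_mx; apply/rowP => i; rewrite !mxE.
- move=> v; have [x [Cx phix]] := phi_onto (lsubmx v).
  pose w := gzpow mul e inv g0 (rsubmx v 0 0 - q x); have Cw : C w by apply: C_gzpow.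
  exists (mul x w); split; first exact: CM.
  rewrite /chi phi_add // q_add // !additive_on_gzpow // phi_g0 q_g0 phix.
  rewrite mul0rz addr0 -mulrzr mul1r intz addrC subrK -[RHS]hsubmxK.
  by congr row_mx; apply/rowP => i; rewrite !mxE ord1.
- move=> x; rewrite /chi; split => [/eqP|[-> qx0]]; last first.
    by apply/eqP; rewrite row_mx_eq0 eqxx; apply/eqP/rowP => i; rewrite !mxE qx0.
  by rewrite row_mx_eq0 => /andP[/eqP -> /eqP/rowP/(_ ord0)]; rewrite !mxE.
Qed.

(* A subgroup of [int^mm] of height at most [j] is free abelian of rank at most
   [j] (row echelon form, one coordinate at a time). *)
Lemma additive_on_free_image mm j (psi : G -> 'rV[int]_mm) : additive_on psi ->
  (forall x, C x -> (ht (psi x) <= j)%N) ->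
  exists r (phi : G -> 'rV[int]_r), [/\ (r <= j)%N, additive_on phi,
    forall v, exists x, C x /\ phi x = v &
    forall x, C x -> (phi x = 0 <-> psi x = 0)].
Proof.
elim: j psi => [|j IH] psi psi_add psi_ht.
  exists 0%N, (fun _ => 0); split => // [x y _ _|v|x Cx]; first by rewrite addr0.
    by exists e; rewrite thinmx0.
  by rewrite (ht_le0 (psi_ht x Cx)).
have lift_IH (psi1 : G -> 'rV[int]_mm) : additive_on psi1 ->
    (forall x, C x -> (ht (psi1 x) <= j)%N) ->
    (forall x, C x -> psi1 x = 0 <-> psi x = 0) -> exists r (phi : G -> 'rV[int]_r),
    [/\ (r <= j.+1)%N, additive_on phi, forall v, exists x, C x /\ phi x = v &
    forall x, C x -> (phi x = 0 <-> psi x = 0)].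
  move=> psi1_add psi1_ht psi1_ker; have [r [phi [le_rj phi_add phi_onto phi_ker]]] :=
    IH psi1 psi1_add psi1_ht.
  exists r, phi; split => //; first exact: leqW.
  by move=> x Cx; rewrite phi_ker //; exact: psi1_ker.
have [lt_j_mm|le_mm_j] := ltnP j mm; last first.
  apply: (lift_IH psi psi_add) => [x _|//]; exact: leq_trans (ht_le_size _) le_mm_j.
case: (additive_on_ht_split (J := Ordinal lt_j_mm) psi_add psi_ht) => [|[g0 [q]]].
  by move=> psi_low; apply: (lift_IH psi psi_add psi_low).
move=> [Cg0 q_add q_g0 psi'_ht q0].
pose psi' x := psi x - q x *: psi g0.
have psi'_add : additive_on psi'.
  by move=> x y Cx Cy; rewrite /psi' psi_add // q_add // scalerDl opprD addrACA.
have [r [phi [le_rj phi_add phi_onto phi_ker]]] := IH psi' psi'_add psi'_ht.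
have phi_g0 : phi g0 = 0 by apply/phi_ker => //; rewrite /psi' q_g0 scale1r subrr.
have [chi_add chi_onto chi_ker] := additive_on_row_mx phi_add q_add Cg0 phi_g0 q_g0 phi_onto.
exists (r + 1)%N, (fun x => row_mx (phi x) (\row_(i < 1) q x)); split => //.
  by rewrite addn1.
move=> x Cx; rewrite chi_ker phi_ker //; split => [[psi'0 qx0]|psi0].
  by move: psi'0; rewrite /psi' qx0 scale0r subr0.
have qx0 := q0 x Cx psi0; by rewrite /psi' psi0 qx0 scale0r subr0.
Qed.

End AdditiveOnSubgroup.

Section FarPoint.
Variables (m : nat) (X : Type) (d : X -> X -> 'rV[int]_m).
Variables (G : Type) (mul : G -> G -> G) (e : G) (inv : G -> G) (act : G -> X -> X).
Hypotheses (tree : is_lambda_tree d) (HG : is_group mul e inv)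
  (Hact : is_isometric_action mul e d act).
Variables (x0 p : X) (t : nat).
Hypothesis far : ~~ (ht (d x0 p) <= t)%N.

Lemma act_dist g a b : d (act g a) (act g b) = d a b.
Proof. by case: Hact => _ []. Qed.

Lemma act_mul g h a : act (mul g h) a = act g (act h a).
Proof. by case: Hact => _ []. Qed.

Lemma actVK g a : act g (act (inv g) a) = a.
Proof.
case: Hact => act1 [actM _]; case: HG => _ [_ [_ [_ mulgV]]].
by rewrite -actM mulgV act1.
Qed.

Lemma actKV g a : act (inv g) (act g a) = a.
Proof.
case: Hact => act1 [actM _]; case: HG => _ [_ [_ [mulVg _]]].
by rewrite -actM mulVg act1.
Qed.

Lemma lexlt_far s : (ht s <= t)%N -> lexlt s (d x0 p).
Proof. by move=> s_low; apply: lexlt_ht s_low (dist_ge0 tree _ _) far. Qed.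

(* Four point condition for [x^-1 x0], [x0], [p], [z p]: the small
   displacements rule out two of the three pairings. *)
Lemma dist_mul_far x z : (ht (d x0 (act x x0)) <= t)%N -> (ht (d p (act z p)) <= t)%N ->
  d x0 (act (mul x z) p) + d x0 p = d x0 (act x p) + d x0 (act z p).
Proof.
move=> x_low z_low; set u := act (inv x) x0.
have dux : d u x0 = d x0 (act x x0) by rewrite -(act_dist x) actVK.
have duzp : d u (act z p) = d x0 (act (mul x z) p) by rewrite -(act_dist x) actVK act_mul.
have dup : d u p = d x0 (act x p) by rewrite -(act_dist x) actVK.
rewrite -duzp -dup.
set S1 := d u (act z p) + d x0 p; set S2 := d u p + d x0 (act z p).
set S3 := d u x0 + d p (act z p).
have S3_low : (ht S3 <= t)%N by rewrite /S3 dux; apply: htD.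
have lt31 : lexlt S3 S1.
  apply: lexlt_le_trans (lexlt_far S3_low) _.
  by rewrite /S1 -[X in lexle X _]add0r lexleD2r; apply: dist_ge0.
have lt32 : lexlt S3 S2.
  have h2 : lexle (d x0 p - d p (act z p)) (d x0 (act z p)).
    by rewrite -(lexleD2r (d p (act z p))) subrK (distC tree p); apply: dist_triangle.
  have h3 : lexlt S3 (d x0 p - d p (act z p)).
    by rewrite -(lexltD2r (d p (act z p))) subrK; apply/lexlt_far/htD.
  apply: lexlt_le_trans h3 (lexle_trans h2 _).
  by rewrite /S2 -[X in lexle X _]add0r lexleD2r; apply: dist_ge0.
apply: lexle_anti.
  by case: (four_point tree u x0 p (act z p)) => //; rewrite lexlt_geF.
case: (four_point tree u x0 (act z p) p) => //.
by rewrite (distC tree (act z p) p) -/S3 lexlt_geF.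
Qed.

(* An elliptic element fixing some [q] preserves Gromov products at [q]; the
   0-hyperbolicity of the tripods (q; x0, p, x p) then pins down [d x0 (x p)]. *)
Lemma elliptic_dist_far x : (ht (d x0 (act x x0)) <= t)%N ->
  (ht (d p (act x p)) <= t)%N -> elliptic act x -> d x0 (act x p) = d x0 p.
Proof.
move=> x_low p_low [q xq].
have dq a : d q (act x a) = d q a by rewrite -{1}xq act_dist.
have gpx a b : gprod d q (act x a) (act x b) = gprod d q a b by rewrite /gprod !dq act_dist.
have hyp := gprod_hyperbolic tree q.
suff: gprod d q x0 p = gprod d q x0 (act x p).
  by rewrite /gprod dq => /addrI/oppr_inj.
case/orP: (lexle_total (d q x0) (d q p)) => le_x0p.
- have lt : lexlt (gprod d q x0 p) (gprod d q p (act x p)).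
    rewrite -subr_lexgt0; have -> : gprod d q p (act x p) - gprod d q x0 p =
      (d x0 p - d p (act x p)) + (d q p - d q x0) by rewrite /gprod dq; row_ring.
    by apply: lexltD_ge0; rewrite ?subr_lexgt0 ?subr_lexge0 //; apply: lexlt_far.
  apply: lexle_anti.
    case: (hyp x0 (act x p) p) => //; rewrite (gprodC tree) => H.
    exact/lexltW/(lexlt_le_trans lt H).
  by case: (hyp x0 p (act x p)) => //; rewrite lexlt_geF.
- have lt : lexlt (gprod d q x0 p) (gprod d q x0 (act x x0)).
    rewrite -subr_lexgt0; have -> : gprod d q x0 (act x x0) - gprod d q x0 p =
      (d x0 p - d x0 (act x x0)) + (d q x0 - d q p) by rewrite /gprod dq; row_ring.
    by apply: lexltD_ge0; rewrite ?subr_lexgt0 ?subr_lexge0 //; apply: lexlt_far.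
  apply: lexle_anti.
    case: (hyp x0 (act x p) (act x x0)) => [H|]; first exact/lexltW/(lexlt_le_trans lt H).
    by rewrite (gprodC tree) gpx.
  case: (hyp (act x x0) (act x p) x0); last by rewrite gpx (gprodC tree).
  by rewrite (gprodC tree) gpx lexlt_geF.
Qed.

(* The branch point [w] of the tripod (p; x0, x x0) is fixed: the four point
   condition first gives [d w (x p) = d x0 p - d w x0], and then [d w (x w) = 0]. *)
Lemma dist_far_elliptic x : (ht (d x0 (act x x0)) <= t)%N ->
  (ht (d p (act x p)) <= t)%N -> d x0 (act x p) = d x0 p ->
  d (act x x0) p = d x0 p -> elliptic act x.
Proof.
move=> x_low p_low dx0xp dxx0p.
have [w [t1 t2 t3]] := tripod tree p x0 (act x x0).
set s := d w x0.
have dwxx0 : d w (act x x0) = s.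
  apply: (@addrI _ (d p w)); rewrite -t2 -t1.
  by rewrite (distC tree p (act x x0)) dxx0p (distC tree p x0).
have dx0xx0 : d x0 (act x x0) = s + s by rewrite t3 dwxx0 (distC tree x0 w).
have dpw : d p w = d x0 p - s by rewrite (distC tree x0 p) t1 addrK.
have dwxp : d w (act x p) = d x0 p - s.
  have lt : lexlt (s + d p (act x p)) (d p w + d x0 (act x p)).
    rewrite -subr_lexgt0; have -> : d p w + d x0 (act x p) - (s + d p (act x p)) =
      d x0 p + (d x0 p - (d x0 (act x x0) + d p (act x p))).
      by rewrite dpw dx0xp dx0xx0; row_ring.
    apply: lexltD_ge0; first exact: lexle_lt_trans (dist_ge0 tree _ _) (lexlt_far x_low).
    by rewrite subr_lexge0; apply/lexltW/lexlt_far/htD.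
  suff: d w (act x p) + d x0 p = d p w + d x0 (act x p) by rewrite dpw dx0xp => /addIr.
  apply: lexle_anti.
    case: (four_point tree w x0 p (act x p)) => H; first by rewrite (distC tree p w).
    exact/lexltW/(lexle_lt_trans H).
  case: (four_point tree w x0 (act x p) p) => H; first by rewrite (distC tree p w).
  by move: H; rewrite (distC tree w p) (distC tree (act x p) p) lexlt_geF.
exists w; apply/esym/(dist0_eq tree); apply: lexle_anti (dist_ge0 tree _ _).
have dxx0xw : d (act x x0) (act x w) = s by rewrite act_dist (distC tree x0 w).
have dxpxw : d (act x p) (act x w) = d x0 p - s by rewrite act_dist dpw.
case: (four_point tree w (act x x0) (act x p) (act x w));
  rewrite act_dist ?dwxp ?dxx0xw ?dwxx0 ?dxpxw -(lexleD2r (- d x0 p)) addrK => H;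
  by move: H; congr lexle; row_ring.
Qed.

Section Character.
Variable C : G -> Prop.
Hypothesis HC : is_subgroup mul e inv C.
Hypotheses (C_x0 : forall x, C x -> (ht (d x0 (act x x0)) <= t)%N)
  (C_p : forall x, C x -> (ht (d p (act x p)) <= t)%N).

Definition busemann x := d x0 (act x p) - d x0 p.

Lemma busemann_additive : additive_on mul C busemann.
Proof.
move=> x z Cx Cz; rewrite /busemann addrACA -(dist_mul_far (C_x0 Cx) (C_p Cz)).
by row_ring.
Qed.

Lemma busemann_eq0 x : C x -> busemann x = 0 <-> elliptic act x.
Proof.
move=> Cx; rewrite /busemann; split => [/subr0_eq dx|]; last first.
  by move=> /(elliptic_dist_far (C_x0 Cx) (C_p Cx)) ->; rewrite subrr.
have dV : d x0 (act (inv x) p) = d x0 p.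
  have := additive_onV HG HC busemann_additive Cx.
  by rewrite /busemann dx subrr oppr0 => /subr0_eq.
apply: dist_far_elliptic (C_x0 Cx) (C_p Cx) dx _.
by rewrite -{1}(actVK x p) act_dist.
Qed.

Lemma busemann_ht x : C x -> (ht (busemann x) <= t)%N.
Proof.
move=> Cx; apply: leq_trans (C_p Cx); apply: ht_lexle_sym; rewrite /busemann.
  rewrite -lexleN2 opprK opprB lexleBlDr addrC (distC tree p).
  exact: dist_triangle.
by rewrite lexleBlDr addrC; apply: dist_triangle.
Qed.

End Character.

End FarPoint.

Section Subgroups.
Variables (G : Type) (mul : G -> G -> G) (e : G) (inv : G -> G).
Hypothesis HG : is_group mul e inv.

Lemma subgroupI (C D : G -> Prop) : is_subgroup mul e inv C -> is_subgroup mul e inv D ->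
  is_subgroup mul e inv (fun x => C x /\ D x).
Proof.
move=> [C1 CM CV] [D1 DM DV]; split => // [x y [Cx Dx] [Cy Dy]|x [Cx Dx]].
  by split; [apply: CM|apply: DM].
by split; [apply: CV|apply: DV].
Qed.

Lemma conj_subgroup (C : G -> Prop) h : is_subgroup mul e inv C ->
  is_subgroup mul e inv (fun x => exists y, C y /\ x = mul (mul h y) (inv h)).
Proof.
have [mulA [mul1g [mulg1 [mulVg mulgV]]]] := HG.
have cancel a b : mul (inv a) (mul a b) = b by rewrite mulA mulVg mul1g.
move=> [C1 CM CV]; split.
- by exists e; rewrite mulg1 mulgV.
- move=> _ _ [y1 [Cy1 ->]] [y2 [Cy2 ->]]; exists (mul y1 y2).
  by split; [exact: CM|rewrite -!mulA cancel].
move=> _ [y [Cy ->]]; exists (inv y); split; first exact: CV.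
have inv_uniq a b : mul a b = e -> inv a = b by move=> ab; rewrite -[inv a]mulg1 -ab cancel.
by apply: inv_uniq; rewrite -!mulA cancel (mulA y) mulgV mul1g mulgV.
Qed.

Lemma Gk_subgroup n (l : G -> 'rV[int]_n) k : is_length_function mul e inv l ->
  is_subgroup mul e inv (Gk l k).
Proof.
move=> [l1 [l_ge0 [lV l_sub]]]; rewrite /Gk; split => [|x y lx ly|x]; rewrite ?lV //.
  by rewrite l1; apply/htP => j _; rewrite mxE.
by apply: leq_trans (ht_lexle (l_ge0 _) (l_sub x y)) (htD lx ly).
Qed.

End Subgroups.

Lemma ht_drop1 n (v : 'rV[int]_n) t : (ht (Defs.drop1 v) <= t)%N = (ht v <= t.+1)%N.
Proof.
have drop1E (j : 'I_n.-1) (i : 'I_n) : val i = j.+1 -> Defs.drop1 v 0 j = v 0 i.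
  move=> ij; rewrite mxE; case: insubP => [u _ uj|]; last by rewrite -ij ltn_ord.
  by congr (v 0 _); apply: val_inj; rewrite uj ij.
apply/htP/htP => [v_top i ti|v_top j tj].
  have i_lt : (i.-1 < n.-1)%N by have := ltn_ord i; lia.
  by rewrite -(drop1E (Ordinal i_lt)) ?v_top //=; lia.
have j_lt : (j.+1 < n)%N by have := ltn_ord j; lia.
by rewrite (drop1E j (Ordinal j_lt)) // v_top.
Qed.

Theorem corollary3p9
  (G : Type) (mul : G -> G -> G) (e : G) (inv : G -> G)
  (n : nat) (l : G -> 'rV[int]_n) (delta : 'rV[int]_n)
  (HG : is_group mul e inv) (Htf : torsion_free mul e)
  (Hl : is_length_function mul e inv l)
  (Hhyp : hyperbolic mul inv l delta) (Hreg : regular mul inv l delta)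
  (HA : ht delta = 1%N)
  (HB : forall g (m : int), m != 0 ->
          lexlt (l (gzpow mul e inv g m)) (l g) ->
          ht (l g - l (gzpow mul e inv g m)) = 1%N)
  (HC : forall g, g <> e -> lexlt 0 (l g))
  (X : Type) (d : X -> X -> 'rV[int]_(n.-1)) (act : G -> X -> X) (x0 : X)
  (HGamma : chiswell_tree mul e l d act x0)
  (k : nat) (Hk1 : (1 <= k)%N) (Hkn : (k < n)%N)
  (h : G) (Hh : Gk l k.+1 h /\ ~ Gk l k h) :
  let C := fun x : G => Gk l k x /\ exists y, Gk l k y /\ x = mul (mul h y) (inv h) in
  let E := fun x : G => C x /\ elliptic act x in
  ((* E is a normal subgroup of C *)
   E e /\ (forall x y, E x -> E y -> E (mul x y)) /\ (forall x, E x -> E (inv x)) /\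
   (forall c x, C c -> E x -> E (mul (mul c x) (inv c)))) /\
  ((* C/E is free abelian of rank at most k-1 *)
   exists (r : nat) (phi : G -> 'rV[int]_r),
     [/\ (r <= k.-1)%N,
         (forall x y, C x -> C y -> phi (mul x y) = phi x + phi y),
         (forall v, exists x, C x /\ phi x = v) &
         (forall x, C x -> (phi x = 0 <-> E x))]).
Proof.
move=> C E; have [tree Hact dist_x0 _] := HGamma.
have Gk_sub := Gk_subgroup k Hl.
have C_sub : is_subgroup mul e inv C := subgroupI Gk_sub (conj_subgroup HG h Gk_sub).
have ht_dist g : (ht (d x0 (act g x0)) <= k.-1)%N = (ht (l g) <= k)%N.
  by rewrite -dist_x0 ht_drop1 prednK.
pose p := act h x0.
have far : ~~ (ht (d x0 p) <= k.-1)%N by rewrite ht_dist; apply/negP; case: Hh.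
have C_x0 x : C x -> (ht (d x0 (act x x0)) <= k.-1)%N by rewrite ht_dist => -[].
have C_p x : C x -> (ht (d p (act x p)) <= k.-1)%N.
  case=> _ [y [Gy ->]].
  by rewrite /p !(act_mul Hact) (actKV HG Hact) (act_dist Hact) ht_dist.
have psi_add := busemann_additive tree HG Hact far C_x0 C_p.
have ker x : C x -> elliptic act x <-> busemann d act x0 p x = 0.
  by move=> Cx; rewrite (busemann_eq0 tree HG Hact far C_sub C_x0 C_p Cx).
split; first exact: (additive_on_kernel_normal HG C_sub psi_add ker).
have [r [phi [le_rk phi_add phi_onto phi_ker]]] :=
  additive_on_free_image HG C_sub psi_add (busemann_ht tree x0 C_p).
exists r, phi; split => // x Cx; rewrite phi_ker // -ker //.
by split => [|[]].
Qed.
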